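(* Let $(x,y,z)\in E_k$ with $x,y,z$ all non-zero. Write $x=2\cos\theta_x$, $y=2\cos\theta_y$, $z=2\cos\theta_z$, $xz-y=2\cos\theta_{xz-y}$ with $\theta_x,\theta_y,\theta_z,\theta_{xz-y}\in[0,\pi]$, so that $$\cos(\theta_x+\theta_z)+\cos(\theta_x-\theta_z)-\cos(\theta_y)-\cos(\theta_{xz-y})=0.$$ If two of the four terms $\cos(\theta_x+\theta_z)$, $\cos(\theta_x-\theta_z)$, $-\cos(\theta_y)$, $-\cos(\theta_{xz-y})$ sum to zero, then $k=2$.
   Context: $E$ is the set $\{(x,y,z)\in[-2,2]^3:-2\le x^2+y^2+z^2-xyz-2\le2\}$ (the $\mathrm{SU}(2)$ character variety of the one-holed torus in trace coordinates), and $E_k=\{(x,y,z)\in E:x^2+y^2+z^2-xyz-2=k\}$. The map $(x,y,z)\mapsto(x,z,xz-y)$ preserves $E$, so $xz-y\in[-2,2]$. *)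

From Stdlib Require Import Reals.
Open Scope R_scope.

Definition kappa (x y z : R) : R := x^2 + y^2 + z^2 - x*y*z - 2.

Definition inE (x y z : R) : Prop :=
  -2 <= x <= 2 /\ -2 <= y <= 2 /\ -2 <= z <= 2 /\ -2 <= kappa x y z <= 2.

Definition inEk (k x y z : R) : Prop := inE x y z /\ kappa x y z = k.

Definition two_of_four_sum_zero (a b c d : R) : Prop :=
  a + b = 0 \/ a + c = 0 \/ a + d = 0 \/ b + c = 0 \/ b + d = 0 \/ c + d = 0.

From Stdlib Require Import Reals Lra.
Open Scope R_scope.

(* Traces 2 cos a, 2 cos (a + c), 2 cos c are those of a reducible (diagonal)
   representation, and such triples satisfy kappa = 2 identically.  The four terms
   in the statement add up to zero, so a pair sums to zero iff its complementary
   pair does; the pair cos (tx + tz) + cos (tx - tz) = x z / 2 cannot vanish, and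
   each remaining pair says cos ty = cos (tx + tz) or cos ty = cos (tx - tz). *)

Lemma cos_plus_add_cos_minus (a c : R) :
  cos (a + c) + cos (a - c) = 2 * cos a * cos c.
Proof. rewrite cos_plus, cos_minus; ring. Qed.

Lemma kappa_2cos_plus (a c : R) :
  kappa (2 * cos a) (2 * cos (a + c)) (2 * cos c) = 2.
Proof.
  assert (Ha : sin a ^ 2 = 1 - cos a ^ 2) by (rewrite <- (sin2_cos2 a); unfold Rsqr; ring).
  assert (Hc : sin c ^ 2 = 1 - cos c ^ 2) by (rewrite <- (sin2_cos2 c); unfold Rsqr; ring).
  unfold kappa; rewrite cos_plus.
  replace (_ - _) with (4 * (sin a ^ 2 * sin c ^ 2 - (1 - cos a ^ 2) * (1 - cos c ^ 2)) + 2)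
    by ring.
  rewrite Ha, Hc; ring.
Qed.

Lemma kappa_2cos_minus (a c : R) :
  kappa (2 * cos a) (2 * cos (a - c)) (2 * cos c) = 2.
Proof. rewrite <- (cos_neg c); exact (kappa_2cos_plus a (- c)). Qed.

Lemma two_of_four_sum_zero_complement (a b c d : R) :
  a + b + c + d = 0 -> two_of_four_sum_zero a b c d ->
  a + b = 0 \/ a + c = 0 \/ a + d = 0.
Proof. unfold two_of_four_sum_zero; lra. Qed.

Theorem proposition5p1 (k x y z tx ty tz tw : R) :
  inEk k x y z ->
  x <> 0 -> y <> 0 -> z <> 0 ->
  0 <= tx <= PI -> 0 <= ty <= PI -> 0 <= tz <= PI -> 0 <= tw <= PI ->
  x = 2 * cos tx -> y = 2 * cos ty -> z = 2 * cos tz ->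
  x * z - y = 2 * cos tw ->
  two_of_four_sum_zero (cos (tx + tz)) (cos (tx - tz)) (- cos ty) (- cos tw) ->
  k = 2.
Proof.
  intros [_ Hk] Hx0 _ Hz0 _ _ _ _ Hx Hy Hz Hw Hpair.
  assert (Hsum : cos (tx + tz) + cos (tx - tz) = x * z / 2)
    by (rewrite cos_plus_add_cos_minus, Hx, Hz; field).
  assert (Hzero : cos (tx + tz) + cos (tx - tz) + - cos ty + - cos tw = 0)
    by (rewrite Hsum; lra).
  rewrite <- Hk, Hx, Hy, Hz.
  destruct (two_of_four_sum_zero_complement _ _ _ _ Hzero Hpair) as [H | [H | H]].
  - exfalso; apply (Rmult_integral_contrapositive_currified x z); lra.
  - replace (cos ty) with (cos (tx + tz)) by lra; apply kappa_2cos_plus.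
  - replace (cos ty) with (cos (tx - tz)) by lra; apply kappa_2cos_minus.
Qed.
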